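(* There exists a graded $\mathbb{R}$-algebra isomorphism $$H^*(BSO(8);\mathbb{R})\cong \mathbb{R}[a,b,c,d]$$ which intertwines the triality automorphism on $H^*(BSO(8);\mathbb{R})$ with the triality action on $\mathbb{R}[a,b,c,d]$, where the grading on $H^*(BSO(8);\mathbb{R})$ is the cohomological degree divided by $4$ and the grading on $\mathbb{R}[a,b,c,d]$ is $\deg a=1$, $\deg b=\deg c=2$, $\deg d=3$.
   Context: $a,b,c,d$ are the parameters of the miniversal deformation $F(x,y,a,b,c,d)=x^3-3xy^2+a(x^2+y^2)+bx+cy+d$ of the singularity $x^3-3xy^2$ (type $D_4^-$); with the stated degrees $F$ is quasihomogeneous. The triality acts on $\mathbb{R}[a,b,c,d]$ by the algebra automorphism fixing $a$ and $d$ and acting on the span of $b,c$ by the rotation by $120^\circ$ (induced from $(a,b,c,d)\mapsto(a,\phi_0(b,c),d)$, $\phi_0$ the rotation by $120^\circ$). On $H^*(BSO(8);\mathbb{R})=\mathbb{R}[p_1,p_2,p_3,e]=\mathbb{R}[L_1,\dots,L_4]^W$ ($W$ the Weyl group of $D_4$, $\deg L_i=2$, $p_i=\sigma_i(L_1^2,\dots,L_4^2)$, $e=L_1L_2L_3L_4$) the triality automorphism is the algebra automorphism with $\phi(L_1)=\tfrac12(L_1+L_2+L_3+L_4)$, $\phi(L_2)=\tfrac12(L_1+L_2-L_3-L_4)$, $\phi(L_3)=\tfrac12(L_1-L_2+L_3-L_4)$, $\phi(L_4)=\tfrac12(-L_1+L_2+L_3-L_4)$. *)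

From HB Require Import structures.
From mathcomp Require Import all_boot all_order all_algebra.
Set Implicit Arguments. Unset Strict Implicit. Unset Printing Implicit Defensive.
Import Order.TTheory GRing.Theory Num.Theory.
Local Open Scope ring_scope.

(* Polynomial ring in four variables X1, X2, X3, X4 over R, realised as
   iterated univariate polynomials: X1 is the outermost variable.
   The coefficient of X1^i X2^j X3^k X4^l in p is  p`_i`_j`_k`_l. *)
Notation mpoly4 R := {poly {poly {poly {poly R}}}}.

Section MPoly4.
Variable R : nzRingType.

Definition C4 (c : R) : mpoly4 R := c%:P%:P%:P%:P.
Definition X1 : mpoly4 R := 'X.
Definition X2 : mpoly4 R := 'X%:P.
Definition X3 : mpoly4 R := 'X%:P%:P.
Definition X4 : mpoly4 R := 'X%:P%:P%:P.

Definition coef4 (p : mpoly4 R) (i j k l : nat) : R := p`_i`_j`_k`_l.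

Definition whomog (w1 w2 w3 w4 n : nat) (p : mpoly4 R) : Prop :=
  forall i j k l, coef4 p i j k l != 0 -> (w1 * i + w2 * j + w3 * k + w4 * l)%N = n.

Definition graded (w1 w2 w3 w4 v1 v2 v3 v4 : nat) (F : mpoly4 R -> mpoly4 R) :=
  forall n p, whomog w1 w2 w3 w4 n p -> whomog v1 v2 v3 v4 n (F p).

Definition alg_hom (F : mpoly4 R -> mpoly4 R) : Prop :=
  [/\ forall x y, F (x + y) = F x + F y,
      forall x y, F (x * y) = F x * F y &
      forall c, F (C4 c) = C4 c].
End MPoly4.
Arguments X1 {R}. Arguments X2 {R}. Arguments X3 {R}. Arguments X4 {R}.

Definition eval1 (A S : nzRingType) (f : A -> S) (y : S) (p : {poly A}) : S :=
  \sum_(i < size p) f p`_i * y ^+ i.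

Definition eval4 (R S : nzRingType) (f : R -> S) (y1 y2 y3 y4 : S)
  (p : mpoly4 R) : S :=
  eval1 (eval1 (eval1 (eval1 f y4) y3) y2) y1 p.

Section Triality.
Variable R : rcfType.
Local Notation P := (mpoly4 R).
Local Notation C := (@C4 R).
Local Notation x1 := (@X1 R). Local Notation x2 := (@X2 R).
Local Notation x3 := (@X3 R). Local Notation x4 := (@X4 R).

Definition subst4 (y1 y2 y3 y4 : P) (p : P) : P := eval4 C y1 y2 y3 y4 p.

(* ---- R[a,b,c,d]: a = x1, b = x2, c = x3, d = x4;
        weights deg a = 1, deg b = deg c = 2, deg d = 3. ---- *)
(* triality on R[a,b,c,d]: (Tf)(a,b,c,d) = f(a, phi0(b,c), d),
   phi0 = rotation by 120 degrees: (b,c) |-> (cos b - sin c, sin b + cos c). *)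
Definition triality_abcd (f : P) : P :=
  subst4 x1
    (C (- 2^-1) * x2 - C (Num.sqrt 3 / 2) * x3)
    (C (Num.sqrt 3 / 2) * x2 - C (2^-1) * x3)
    x4 f.

(* ---- H^*(BSO(8);R) = R[p1,p2,p3,e]: p1 = x1, p2 = x2, p3 = x3, e = x4;
        grading = cohomological degree / 4: p1,p2,p3,e of degree 1,2,3,2. ---- *)
(* ---- R[L1,..,L4]: Li = Xi. ---- *)
Definition Lsq1 : P := x1 ^+ 2.
Definition Lsq2 : P := x2 ^+ 2.
Definition Lsq3 : P := x3 ^+ 2.
Definition Lsq4 : P := x4 ^+ 2.

(* the inclusion R[p1,p2,p3,e] -> R[L1,..,L4] (onto the W-invariants):
   p_i |-> sigma_i(L1^2,..,L4^2), e |-> L1 L2 L3 L4 *)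
Definition iotaBSO8 (f : P) : P :=
  subst4
    (Lsq1 + Lsq2 + Lsq3 + Lsq4)
    (Lsq1 * Lsq2 + Lsq1 * Lsq3 + Lsq1 * Lsq4 + Lsq2 * Lsq3 + Lsq2 * Lsq4
       + Lsq3 * Lsq4)
    (Lsq1 * Lsq2 * Lsq3 + Lsq1 * Lsq2 * Lsq4 + Lsq1 * Lsq3 * Lsq4
       + Lsq2 * Lsq3 * Lsq4)
    (x1 * x2 * x3 * x4) f.

Definition triality_L (f : P) : P :=
  subst4
    (C (2^-1) * (x1 + x2 + x3 + x4))
    (C (2^-1) * (x1 + x2 - x3 - x4))
    (C (2^-1) * (x1 - x2 + x3 - x4))
    (C (2^-1) * (- x1 + x2 + x3 - x4)) f.
End Triality.

From HB Require Import structures.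
From mathcomp Require Import all_boot all_order all_algebra.
From mathcomp.algebra_tactics Require Import ring.
Import Order.TTheory GRing.Theory Num.Theory.
Set Implicit Arguments. Unset Strict Implicit. Unset Printing Implicit Defensive.
Local Open Scope ring_scope.

(* The isomorphism is the algebra substitution
     Psi : a |-> p1,  b |-> 8 sqrt3 e,  c |-> p1^2 - 4 p2,
           d |-> p3 - p1 p2 / 6 + p1^3 / 24
   from R[a,b,c,d] to R[p1,p2,p3,e], both realised as R[X1,X2,X3,X4].
   Every claim about Psi is an equality between R-algebra endomorphisms of
   R[X1..X4], and such morphisms are determined by the images of the four
   variables (rmorph4_eq). *)

Section PolyMorphisms.
Variables A S : comNzRingType.

Definition ev (f : {rmorphism A -> S}) (y : S) : {rmorphism {poly A} -> S} :=
  horner_morph (fun a => mulrC y (f a)).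

Lemma evC f y a : ev f y a%:P = f a. Proof. exact: horner_morphC. Qed.
Lemma evX f y : ev f y 'X = y. Proof. exact: horner_morphX. Qed.

Lemma eval1_ev (f : {rmorphism A -> S}) y p : eval1 f y p = ev f y p.
Proof.
rewrite /ev /= /horner_morph (@horner_coef_wide _ (size p)).
  by apply: eq_bigr => i _; rewrite coef_map.
by rewrite /map_poly size_poly.
Qed.
End PolyMorphisms.

Lemma eval1_ext (A S : nzRingType) (f g : A -> S) y p :
  f =1 g -> eval1 f y p = eval1 g y p.
Proof. by move=> fg; apply: eq_bigr => i _; rewrite fg. Qed.

HB.instance Definition _ (K : comNzRingType) :=
  GRing.RMorphism.copy (@C4 K) (polyC \o polyC \o polyC \o polyC).

Section Generators.
Variables (K S : comNzRingType) (k : {rmorphism K -> S}) (x1 x2 x3 x4 : S).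

Record substitutes (f : {rmorphism S -> S}) (y1 y2 y3 y4 : S) : Prop :=
  Substitutes {
    subst_const : forall c, f (k c) = k c;
    subst_x1 : f x1 = y1; subst_x2 : f x2 = y2;
    subst_x3 : f x3 = y3; subst_x4 : f x4 = y4 }.

Definition agree (T : Type) (g h : S -> T) : Prop :=
  [/\ forall c, g (k c) = h (k c), g x1 = h x1, g x2 = h x2, g x3 = h x3
    & g x4 = h x4].
End Generators.

Section FourVariables.
Variables K S : comNzRingType.
Local Notation P := (mpoly4 K).

Definition S4 (f : {rmorphism K -> S}) (y1 y2 y3 y4 : S) : {rmorphism P -> S} :=
  ev (ev (ev (ev f y4) y3) y2) y1.

Lemma eval4_S4 (f : {rmorphism K -> S}) y1 y2 y3 y4 p :
  eval4 f y1 y2 y3 y4 p = S4 f y1 y2 y3 y4 p.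
Proof.
rewrite /eval4 -eval1_ev; apply: eval1_ext => q.
rewrite -eval1_ev; apply: eval1_ext => r.
by rewrite -eval1_ev; apply: eval1_ext => s; rewrite -eval1_ev.
Qed.

Section Values.
Variables (f : {rmorphism K -> S}) (y1 y2 y3 y4 : S).
Lemma S4C c : S4 f y1 y2 y3 y4 (C4 c) = f c. Proof. by rewrite /S4 /C4 !evC. Qed.
Lemma S4X1 : S4 f y1 y2 y3 y4 X1 = y1. Proof. by rewrite /S4 evX. Qed.
Lemma S4X2 : S4 f y1 y2 y3 y4 X2 = y2. Proof. by rewrite /S4 /X2 evC evX. Qed.
Lemma S4X3 : S4 f y1 y2 y3 y4 X3 = y3. Proof. by rewrite /S4 /X3 !evC evX. Qed.
Lemma S4X4 : S4 f y1 y2 y3 y4 X4 = y4. Proof. by rewrite /S4 /X4 !evC evX. Qed.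
End Values.

(* Two ring morphisms out of K[X1..X4] agreeing on constants and on the four
   variables coincide: induct on polynomials one variable at a time, from the
   innermost X4 to the outermost X1.  (The equalities are combined with
   [congr] rather than [rewrite], which would try to unify distinct
   polynomial constants.) *)
Lemma rmorph4_eq (g h : {rmorphism P -> S}) :
  (forall c, g (C4 c) = h (C4 c)) ->
  g X1 = h X1 -> g X2 = h X2 -> g X3 = h X3 -> g X4 = h X4 -> g =1 h.
Proof.
rewrite /C4 /X1 /X2 /X3 /X4 => eqC eq1 eq2 eq3 eq4.
have eq_s s : g s%:P%:P%:P = h s%:P%:P%:P.
  elim/poly_ind: s => [|s c IH]; first by rewrite !polyC0 !rmorph0.
  rewrite !(polyCD, polyCM) !(rmorphD, rmorphM).
  by congr (_ * _ + _); [exact: IH | exact: eq4 | exact: eqC].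
have eq_r r : g r%:P%:P = h r%:P%:P.
  elim/poly_ind: r => [|r s IH]; first by rewrite !polyC0 !rmorph0.
  rewrite !(polyCD, polyCM) !(rmorphD, rmorphM).
  by congr (_ * _ + _); [exact: IH | exact: eq3 | exact: eq_s].
have eq_q q : g q%:P = h q%:P.
  elim/poly_ind: q => [|q r IH]; first by rewrite !polyC0 !rmorph0.
  rewrite !(polyCD, polyCM) !(rmorphD, rmorphM).
  by congr (_ * _ + _); [exact: IH | exact: eq2 | exact: eq_r].
elim/poly_ind => [|p q IH]; first by rewrite !rmorph0.
rewrite !(rmorphD, rmorphM).
by congr (_ * _ + _); [exact: IH | exact: eq1 | exact: eq_q].
Qed.
End FourVariables.

Section Composites.
Variable K : comNzRingType.
Local Notation P := (mpoly4 K).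
Local Notation agree_P := (@agree K P (@C4 K) X1 X2 X3 X4 P).

Lemma agree_eq2 (g1 g2 h1 h2 : {rmorphism P -> P}) :
  agree_P (g1 \o g2) (h1 \o h2) -> forall p, g1 (g2 p) = h1 (h2 p).
Proof.
case=> eqC eq1 eq2 eq3 eq4.
exact: (@rmorph4_eq K P (g1 \o g2) (h1 \o h2) eqC eq1 eq2 eq3 eq4).
Qed.

Lemma agree_eq3 (g1 g2 g3 h1 h2 h3 : {rmorphism P -> P}) :
  agree_P (g1 \o g2 \o g3) (h1 \o h2 \o h3) ->
  forall p, g1 (g2 (g3 p)) = h1 (h2 (h3 p)).
Proof.
case=> eqC eq1 eq2 eq3 eq4.
exact: (@rmorph4_eq K P (g1 \o g2 \o g3) (h1 \o h2 \o h3) eqC eq1 eq2 eq3 eq4).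
Qed.
End Composites.

Section Scaling.
Variable A : comNzRingType.

Definition sc1 (c : A) : {rmorphism {poly A} -> {poly A}} :=
  @horner_morph _ _ polyC (c%:P * 'X) (fun a => mulrC _ _).

Lemma sc1C c a : sc1 c a%:P = a%:P. Proof. exact: horner_morphC. Qed.
Lemma sc1X c : sc1 c 'X = c%:P * 'X. Proof. exact: horner_morphX. Qed.
Lemma coef_sc1 c p i : (sc1 c p)`_i = c ^+ i * p`_i.
Proof.
elim/poly_ind: p i => [|p d IH] i; first by rewrite rmorph0 !coef0 mulr0.
rewrite rmorphD rmorphM sc1C sc1X mulrA !coefD !coefMX !coefC coefMC.
case: i => [|i] /=; first by rewrite expr0 mul1r.
by rewrite IH exprS !addr0 [LHS]mulrC mulrA.
Qed.

Definition wscale (c : A) (f : {rmorphism A -> A}) : {rmorphism {poly A} -> {poly A}} :=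
  sc1 c \o map_poly f.

Lemma coef_wscale c f p i : (wscale c f p)`_i = c ^+ i * f p`_i.
Proof. by rewrite /= coef_sc1 coef_map. Qed.
Lemma wscaleC c f a : wscale c f a%:P = (f a)%:P.
Proof. by rewrite /= map_polyC sc1C. Qed.
Lemma wscaleX c f : wscale c f 'X = c%:P * 'X.
Proof. by rewrite /= map_polyX sc1X. Qed.
End Scaling.

Section WeightedScaling.
Variable K : comNzRingType.
Local Notation P := (mpoly4 K).
Variables a1 a2 a3 a4 : K.

Definition scale4 : {rmorphism P -> P} :=
  wscale a1%:P%:P%:P (wscale a2%:P%:P (wscale a3%:P (sc1 a4))).

Lemma coef4_scale p i j k l :
  coef4 (scale4 p) i j k l =
  a1 ^+ i * a2 ^+ j * a3 ^+ k * a4 ^+ l * coef4 p i j k l.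
Proof.
rewrite /coef4; do 3! rewrite coef_wscale -!rmorphXn !coefCM.
by rewrite coef_sc1 !mulrA.
Qed.

Lemma scale4C c : scale4 (C4 c) = C4 c. Proof. by rewrite !wscaleC sc1C. Qed.
Lemma scale4X1 : scale4 X1 = C4 a1 * X1. Proof. exact: wscaleX. Qed.
Lemma scale4X2 : scale4 X2 = C4 a2 * X2.
Proof. by rewrite /X2 wscaleC wscaleX polyCM. Qed.
Lemma scale4X3 : scale4 X3 = C4 a3 * X3.
Proof. by rewrite /X3 !wscaleC wscaleX !polyCM. Qed.
Lemma scale4X4 : scale4 X4 = C4 a4 * X4.
Proof. by rewrite /X4 !wscaleC sc1X !polyCM. Qed.
End WeightedScaling.

Section Homogeneity.
Variable K : numDomainType.
Local Notation P := (mpoly4 K).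

Lemma coef4_eq (p q : P) :
  (forall i j k l, coef4 p i j k l = coef4 q i j k l) -> p = q.
Proof.
move=> eq_pq; apply/polyP => i; apply/polyP => j; apply/polyP => k.
by apply/polyP => l; apply: eq_pq.
Qed.

Lemma whomog_scale w1 w2 w3 w4 n (p : P) : whomog w1 w2 w3 w4 n p ->
  forall x : K, scale4 (x ^+ w1) (x ^+ w2) (x ^+ w3) (x ^+ w4) p = C4 (x ^+ n) * p.
Proof.
move=> hom x; apply: coef4_eq => i j k l.
rewrite coef4_scale /coef4 /C4 !coefCM -/(coef4 p i j k l).
have [->|nz] := eqVneq (coef4 p i j k l) 0; first by rewrite !mulr0.
by rewrite -(hom _ _ _ _ nz) -!exprM -!exprD.
Qed.

Lemma scale_whomog w1 w2 w3 w4 n (p : P) :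
  scale4 (2 ^+ w1) (2 ^+ w2) (2 ^+ w3) (2 ^+ w4) p = C4 (2 ^+ n) * p ->
  whomog w1 w2 w3 w4 n p.
Proof.
move=> eq_scale i j k l nz.
have := congr1 (fun q => coef4 q i j k l) eq_scale.
rewrite coef4_scale /coef4 /C4 coefCM -/(coef4 p i j k l) !coefCM.
rewrite -!exprM -!exprD => /(mulIf nz) /eqP.
by rewrite -!natrX eqr_nat eqn_exp2l // => /eqP.
Qed.
End Homogeneity.

(* The identities behind the theorem, on the generators x1..x4 of an abstract
   commutative R-algebra S; working with abstract generators keeps the
   rewriting from unfolding the concrete polynomials X1..X4. *)
Section GeneratorIdentities.
Variables (R : rcfType) (S : comNzRingType) (k : {rmorphism R -> S}).
Variables x1 x2 x3 x4 : S.
Local Notation s := (Num.sqrt (3 : R)).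
Local Notation substitutes_S := (@substitutes R S k x1 x2 x3 x4).
Local Notation agree_S := (@agree R S k x1 x2 x3 x4 S).

Lemma sqrt3_neq0 : s != 0.
Proof. by rewrite sqrtr_eq0 -ltNge ltr0n. Qed.

(* The only place where sqrt 3 ^ 2 = 3 enters the computations. *)
Lemma half_sqrt3 : s / 2 = 3 / (2 * s).
Proof.
have s2 : s * s = 3 by rewrite -expr2 sqr_sqrtr // ler0n.
by rewrite -[X in _ = X / _]s2; field; rewrite sqrt3_neq0.
Qed.

(* S is embedded in a field F, where the identities are checked by [field];
   F has characteristic 0 since it contains the image of R. *)
Variables (F : fieldType) (j : {rmorphism S -> F}).
Hypothesis j_inj : injective j.

Lemma jk_eq0 c : (j (k c) == 0) = (c == 0).
Proof. exact: (fmorph_eq0 (j \o k)). Qed.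

Lemma natrF_eq0 n : (n%:R == 0 :> F) = (n == 0)%N.
Proof. by rewrite -(rmorph_nat (j \o k)) jk_eq0 pnatr_eq0. Qed.

(* T: triality on R[a,b,c,d];  Psi, Phi: the isomorphism and its inverse;
   Io: R[p1,p2,p3,e] -> R[L1..L4];  L: triality on R[L1..L4];
   Sc_target, Sc_source: weighted scalings for the weights of p1,p2,p3,e and
   of a,b,c,d. *)
Variables (T Psi Phi Io L : {rmorphism S -> S}).
Hypothesis hT : substitutes_S T x1 (k (- 2^-1) * x2 - k (s / 2) * x3)
  (k (s / 2) * x2 - k (2^-1) * x3) x4.
Hypothesis hPsi : substitutes_S Psi x1 (k (8 * s) * x4) (x1 ^+ 2 - k 4 * x2)
  (x3 - k (6^-1) * x1 * x2 + k (24^-1) * x1 ^+ 3).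
Hypothesis hPhi : substitutes_S Phi x1 (k (4^-1) * (x1 ^+ 2 - x3))
  (x4 - k (24^-1) * x1 * x3) (k ((8 * s)^-1) * x2).
Hypothesis hIo : substitutes_S Io
  (x1 ^+ 2 + x2 ^+ 2 + x3 ^+ 2 + x4 ^+ 2)
  (x1 ^+ 2 * x2 ^+ 2 + x1 ^+ 2 * x3 ^+ 2 + x1 ^+ 2 * x4 ^+ 2 + x2 ^+ 2 * x3 ^+ 2
     + x2 ^+ 2 * x4 ^+ 2 + x3 ^+ 2 * x4 ^+ 2)
  (x1 ^+ 2 * x2 ^+ 2 * x3 ^+ 2 + x1 ^+ 2 * x2 ^+ 2 * x4 ^+ 2
     + x1 ^+ 2 * x3 ^+ 2 * x4 ^+ 2 + x2 ^+ 2 * x3 ^+ 2 * x4 ^+ 2)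
  (x1 * x2 * x3 * x4).
Hypothesis hL : substitutes_S L
  (k (2^-1) * (x1 + x2 + x3 + x4)) (k (2^-1) * (x1 + x2 - x3 - x4))
  (k (2^-1) * (x1 - x2 + x3 - x4)) (k (2^-1) * (- x1 + x2 + x3 - x4)).
Variables (lam : R) (Sc_target Sc_source : {rmorphism S -> S}).
Hypothesis hSt : substitutes_S Sc_target
  (k (lam ^+ 1) * x1) (k (lam ^+ 2) * x2) (k (lam ^+ 3) * x3) (k (lam ^+ 2) * x4).
Hypothesis hSs : substitutes_S Sc_source
  (k (lam ^+ 1) * x1) (k (lam ^+ 2) * x2) (k (lam ^+ 2) * x3) (k (lam ^+ 3) * x4).

Ltac eval_subst H :=
  rewrite ?(rmorphD, rmorphB, rmorphN, rmorphM, rmorphXn, subst_const H,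
            subst_x1 H, subst_x2 H, subst_x3 H, subst_x4 H).
Ltac field_closing :=
  apply: j_inj; field; rewrite ?jk_eq0 ?sqrt3_neq0 ?natrF_eq0.

Lemma Psi_PhiK : agree_S (Psi \o Phi) idfun.
Proof.
by split=> [c||||] /=; eval_subst hPhi; eval_subst hPsi => //; field_closing.
Qed.

Lemma Phi_PsiK : agree_S (Phi \o Psi) idfun.
Proof.
by split=> [c||||] /=; eval_subst hPsi; eval_subst hPhi => //; field_closing.
Qed.

Lemma Psi_scale : agree_S (Sc_target \o Psi) (Psi \o Sc_source).
Proof.
by split=> [c||||] /=; eval_subst hPsi; eval_subst hSt; eval_subst hSs;
  eval_subst hPsi => //; field_closing.
Qed.

Lemma Psi_triality : agree_S (Io \o Psi \o T) (L \o Io \o Psi).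
Proof.
(* on x3, sqrt 3 / 2 = 3 / (2 sqrt 3) lets [field] cancel the product
   (sqrt 3 / 2) * (8 sqrt 3) coming from T and Psi *)
split=> [c||||] /=; [| | | rewrite (subst_x3 hT) half_sqrt3 | ];
  by eval_subst hT; eval_subst hPsi; eval_subst hIo; eval_subst hL; field_closing.
Qed.
End GeneratorIdentities.

Section TrialityIsomorphism.
Variable R : rcfType.
Local Notation P := (mpoly4 R).
Local Notation s := (Num.sqrt (3 : R)).
Local Notation x1 := (@X1 R). Local Notation x2 := (@X2 R).
Local Notation x3 := (@X3 R). Local Notation x4 := (@X4 R).
Local Notation substitutes_P := (@substitutes R P (@C4 R) x1 x2 x3 x4).
Local Notation agree_P := (@agree R P (@C4 R) x1 x2 x3 x4 P).

(* The substitution X_i |-> y_i as a ring morphism; Defs' subst4 computes it.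
   (Implicit arguments are given explicitly in this section: inferring the
   ring structures of R[X1..X4] from an rcfType is very slow.) *)
Definition sub (y1 y2 y3 y4 : P) : {rmorphism P -> P} :=
  @S4 R P (@C4 R) y1 y2 y3 y4.

Lemma subst4E y1 y2 y3 y4 : subst4 y1 y2 y3 y4 =1 sub y1 y2 y3 y4.
Proof. by move=> p; exact: (@eval4_S4 R P (@C4 R) y1 y2 y3 y4 p). Qed.

Lemma sub_const y1 y2 y3 y4 c : sub y1 y2 y3 y4 (C4 c) = C4 c.
Proof. exact: (@S4C R P (@C4 R) y1 y2 y3 y4). Qed.

Lemma sub_substitutes y1 y2 y3 y4 : substitutes_P (sub y1 y2 y3 y4) y1 y2 y3 y4.
Proof.
split; [exact: sub_const | exact: (@S4X1 R P (@C4 R) y1 y2 y3 y4)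
  | exact: (@S4X2 R P (@C4 R) y1 y2 y3 y4) | exact: (@S4X3 R P (@C4 R) y1 y2 y3 y4)
  | exact: (@S4X4 R P (@C4 R) y1 y2 y3 y4)].
Qed.

Lemma scale_substitutes a1 a2 a3 a4 : substitutes_P
  (scale4 a1 a2 a3 a4) (C4 a1 * x1) (C4 a2 * x2) (C4 a3 * x3) (C4 a4 * x4).
Proof.
split; [exact: (@scale4C R) | exact: (@scale4X1 R) | exact: (@scale4X2 R)
  | exact: (@scale4X3 R) | exact: (@scale4X4 R)].
Qed.

Lemma subst4_agree3 (a1 a2 a3 a4 b1 b2 b3 b4 c1 c2 c3 c4 : P)
    (M : {rmorphism P -> P}) :
  agree_P (sub a1 a2 a3 a4 \o M \o sub b1 b2 b3 b4)
          (sub c1 c2 c3 c4 \o sub a1 a2 a3 a4 \o M) ->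
  forall f, subst4 a1 a2 a3 a4 (M (subst4 b1 b2 b3 b4 f)) =
            subst4 c1 c2 c3 c4 (subst4 a1 a2 a3 a4 (M f)).
Proof. by move=> /agree_eq3 eq_agree f; rewrite !subst4E; exact: eq_agree. Qed.

(* R[X1..X4] embeds in its fraction field, where [field] applies. *)
Lemma tofrac_inj : injective (@tofrac P).
Proof. by move=> p q /eqP; rewrite tofrac_eq => /eqP. Qed.

Definition Psi : {rmorphism P -> P} :=
  sub x1 (C4 (8 * s) * x4) (x1 ^+ 2 - C4 4 * x2)
    (x3 - C4 (6^-1) * x1 * x2 + C4 (24^-1) * x1 ^+ 3).
Definition Psi_inv : {rmorphism P -> P} :=
  sub x1 (C4 (4^-1) * (x1 ^+ 2 - x3)) (x4 - C4 (24^-1) * x1 * x3)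
    (C4 ((8 * s)^-1) * x2).

Lemma Psi_alg_hom : alg_hom Psi.
Proof. by split; [exact: rmorphD | exact: rmorphM | exact: sub_const]. Qed.

Lemma Psi_bijective : bijective Psi.
Proof.
have PsiK : cancel Psi Psi_inv.
  apply: (agree_eq2 (h1 := idfun) (h2 := idfun)).
  by apply: (@Phi_PsiK R P (@C4 R) x1 x2 x3 x4 _ (@tofrac P) tofrac_inj);
    exact: sub_substitutes.
have Psi_invK : cancel Psi_inv Psi.
  apply: (agree_eq2 (h1 := idfun) (h2 := idfun)).
  by apply: (@Psi_PhiK R P (@C4 R) x1 x2 x3 x4 _ (@tofrac P) tofrac_inj);
    exact: sub_substitutes.
exact: Bijective PsiK Psi_invK.
Qed.

(* Psi sends the weights (1,2,2,3) of a,b,c,d to the weights (1,2,3,2) of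
   p1,p2,p3,e: it intertwines the two weighted scalings by 2. *)
Lemma Psi_graded : graded 1 2 2 3 1 2 3 2 Psi.
Proof.
move=> n p hom; apply: scale_whomog.
have Psi_scale2 q : scale4 (2 ^+ 1) (2 ^+ 2) (2 ^+ 3) (2 ^+ 2) (Psi q) =
                    Psi (scale4 (2 ^+ 1) (2 ^+ 2) (2 ^+ 2) (2 ^+ 3) q).
  apply: agree_eq2.
  apply: (@Psi_scale R P (@C4 R) x1 x2 x3 x4 _ (@tofrac P) tofrac_inj);
    [exact: sub_substitutes | exact: scale_substitutes | exact: scale_substitutes].
by rewrite Psi_scale2 (whomog_scale hom) rmorphM sub_const.
Qed.

Lemma Psi_triality_intertwines f :
  iotaBSO8 (Psi (triality_abcd f)) = triality_L (iotaBSO8 (Psi f)).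
Proof.
rewrite /iotaBSO8 /triality_abcd /triality_L /Lsq1 /Lsq2 /Lsq3 /Lsq4.
apply: subst4_agree3.
by apply: (@Psi_triality R P (@C4 R) x1 x2 x3 x4 _ (@tofrac P) tofrac_inj);
  exact: sub_substitutes.
Qed.
End TrialityIsomorphism.

Theorem mainTheorem8 (R : rcfType) :
  exists Psi : mpoly4 R -> mpoly4 R,
    [/\ alg_hom Psi,
        bijective Psi,
        graded 1 2 2 3 1 2 3 2 Psi &
        forall f : mpoly4 R,
          iotaBSO8 (Psi (triality_abcd f)) = triality_L (iotaBSO8 (Psi f))].
Proof.
exists (Psi R); split.
- exact: Psi_alg_hom.
- exact: Psi_bijective.
- exact: Psi_graded.
- exact: Psi_triality_intertwines.
Qed.
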